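(* Let $f \in \mathbb{F}_q[x]$ be a squarefree polynomial of degree $n$. The recursion depth of Algorithm 3 (described below) on input $(f, 1, n)$ is $O(\log n)$.
   Context: For squarefree $g\in\mathbb{F}_q[x]$, $\sigma$ denotes the Frobenius automorphism of $\mathbb{F}_q[x]/g$, determined by $x\mapsto x^q$. Algorithm 2 is a procedure which, given a monic squarefree $g$ of degree $m$, an element $\tau$ of the cyclic group generated by the Frobenius of $\mathbb{F}_q[x]/g$ and a bound $\ell$, first tries to compute the order of $\tau$ by quantum order finding with $\ell$-bit precision; if this succeeds it returns $g$ and the order; otherwise it removes and outputs all irreducible factors of $g$ of degree $\le m^{2/3}$, and returns the remaining factor $\tilde g$ together with the order of the Frobenius of $\mathbb{F}_q[x]/\tilde g$ (computed by quantum order finding with precision $\lceil c_1 m^{1/3}\log m\rceil$). Algorithm 3, on input $(f,s,n)$ where $f$ is monic squarefree and $s>0$ divides the degrees of all irreducible factors of $f$: (1) compute $\tilde\sigma:=\sigma^s \bmod f$; if $\tilde\sigma=\mathrm{id}$, output $f$ and return. (2) Compute the order $d$ of $\tilde\sigma$ using Algorithm 2 with inputs $(f,\tilde\sigma,\log^2 n)$, and replace $f$ by the output polynomial $\tilde f$ (factors removed by Algorithm 2 are output). (3) Factor $d=p_1^{e_1}\cdots p_\ell^{e_\ell}$. (4) Compute $g:=\gcd(\tilde\sigma^{d/\prod_{i=1}^\ell p_i}(x)-x, f)$ and $g_0:=f/g$; set $T:=\{\}$; if $g\ne1$ add $(g,s,n)$ to $T$. (5) For $i=1,\dots,\ell$: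 compute $g_i:=\gcd(\tilde\sigma^{d/p_i}(x)-x, g_{i-1})$; if $g_i\ne1$, compute $h_i:=g_{i-1}/g_i$ and add $(h_i,sp_i^{e_i},n)$ to $T$; otherwise set $g_i:=g_{i-1}$ and $s:=sp_i^{e_i}$. (6) Add $(g_\ell,s,n)$ to $T$ and recursively process all tuples in $T$. Called on $(f,1,n)$, Algorithm 3 produces the distinct-degree factorization of $f$ (the products of all irreducible factors of each given degree). *)

From HB Require Import structures.
From mathcomp Require Import all_boot all_order all_algebra all_field.
Set Implicit Arguments. Unset Strict Implicit. Unset Printing Implicit Defensive.
Import GRing.Theory.

Section Alg3.
Variable F : finFieldType.

Definition q : nat := #|F|.

Definition squarefree (f : {poly F}) : Prop :=
  forall g : {poly F}, (g * g %| f)%R -> (size g <= 1)%N.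

(* x^{q^k} - x ; sigma^k = id on F_q[x]/g iff g divides it *)
Definition frobX (k : nat) : {poly F} := ('X ^+ (q ^ k) - 'X)%R.

Definition mgcd (a b : {poly F}) : {poly F} :=
  ((lead_coef (gcdp a b))^-1 *: gcdp a b)%R.

(* d is the order of tau = sigma^s in Aut(F_q[x]/g) *)
Definition is_order (g : {poly F}) (s d : nat) : Prop :=
  (0 < d)%N /\ (g %| frobX (s * d))%R /\
  forall d', (0 < d')%N -> (g %| frobX (s * d'))%R -> (d <= d')%N.

(* gt = the factor of g that remains after removing all irreducible
   factors of degree <= m^{2/3}, m = deg g *)
Definition small_removed (g gt : {poly F}) : Prop :=
  gt \is monic /\ (gt %| g)%R /\
  forall P : {poly F}, P \is monic -> irreducible_poly P -> (P %| g)%R ->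
    ((P %| gt)%R <-> ((size g).-1 ^ 2 < (size P).-1 ^ 3)%N).

(* possible outputs (ft, d) of Algorithm 2 on input (g, sigma^s, _):
   either order finding succeeds, or the fallback branch is taken *)
Definition alg2_out (g : {poly F}) (s : nat) (gt : {poly F}) (d : nat) : Prop :=
  (gt = g /\ is_order g s d) \/ (small_removed g gt /\ is_order gt s d).

(* one iteration of step (5) of Algorithm 3; s0 is the s of step (1),
   state = (g_{i-1}, current s, current T) *)
Definition alg3_loop_step (f : {poly F}) (s0 d : nat)
    (st : {poly F} * nat * seq ({poly F} * nat)) (p : nat)
    : {poly F} * nat * seq ({poly F} * nat) :=
  let: (gprev, s, T) := st in
  let gi := mgcd (frobX (s0 * (d %/ p)) %% f)%R gprev in
  if gi != 1%R then (gi, s, rcons T ((gprev %/ gi)%R, s * p ^ logn p d))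
  else (gprev, s * p ^ logn p d, T).

(* the list T of recursive calls made in steps (3)-(6), for the current
   polynomial f (output of Algorithm 2), the s of the call, and the order d *)
Definition alg3_children (f : {poly F}) (s0 d : nat) : seq ({poly F} * nat) :=
  let ps := primes d in
  let g := mgcd (frobX (s0 * (d %/ \prod_(p <- ps) p)) %% f)%R f in
  let g0 := (f %/ g)%R in
  let T0 := if g != 1%R then [:: (g, s0)] else [::] in
  let: (gl, sl, T) := foldl (alg3_loop_step f s0 d) (g0, s0, T0) ps in
  rcons T (gl, sl).

(* a call of Algorithm 3 on (f, s, n) may directly recursively call (f', s', n) *)
Definition alg3_call (f : {poly F}) (s : nat) (f' : {poly F}) (s' : nat) : Prop :=
  ~ (f %| frobX s)%R /\
  exists (ft : {poly F}) (d : nat),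
    alg2_out f s ft d /\ (f', s') \in alg3_children ft s d.

End Alg3.

From HB Require Import structures.
From mathcomp Require Import all_boot all_order all_algebra all_field.
From mathcomp Require Import zify.
From Stdlib Require Import Classical.
Set Implicit Arguments. Unset Strict Implicit. Unset Printing Implicit Defensive.
Import GRing.Theory.

(* Fix an irreducible factor P of the polynomial of the last call of a chain, and attach
   to a call on (g, s) the potential max_p v_p(d) + log2 b, where d is the order of
   tau = sigma^s on the output of Algorithm 2 and b the order of tau on F_q[x]/P.
   A child that keeps s is fixed by tau^(d/p) for every prime p | d, so its order
   divides every d/p and all p-adic valuations of d drop.  A child whose s absorbs
   p^(v_p d) has no factor fixed by tau^(d/p); since P divides it, p^(v_p d) divides b,
   and the new tau has order at most b/2 on F_q[x]/P.  So the potential decreases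
   along the chain.  For the first call it is at most 2 log2 n: b divides deg P, and a
   prime power dividing the order of sigma on a squarefree polynomial of degree n
   already divides the degree of one of its irreducible factors. *)

Lemma prod_primes_dvdn d : \prod_(p <- primes d) p %| d.
Proof.
have [-> | d_gt0] := posnP d; first exact: dvdn0.
rewrite {2}(prod_prime_decomp d_gt0) prime_decompE big_map /= big_seq [X in _ %| X]big_seq.
apply: (big_ind2 (fun a b => a %| b)) => [|a b c e|p] //; first exact: dvdn_mul.
by rewrite -logn_gt0 => /dvdn_exp->.
Qed.

Lemma pfactor_logn_dvdn b d p :
  0 < d -> prime p -> b %| d -> ~~ (b %| d %/ p) -> p ^ logn p d %| b.
Proof.
move=> d_gt0 p_pr /dvdnP[m def_d]; apply: contraR.
have /andP[m_gt0 b_gt0] : (0 < m) && (0 < b) by rewrite -muln_gt0 -def_d.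
rewrite pfactor_dvdn // -ltnNge def_d lognM // -{1}[logn p b]add0n ltn_add2r.
by rewrite logn_gt0 mem_primes => /and3P[_ _ p_m]; rewrite -divn_mulAC // dvdn_mull.
Qed.

Definition max_logn (d : nat) : nat := \max_(p <- primes d) logn p d.

Lemma leq_max_logn p d : logn p d <= max_logn d.
Proof.
have [p_d | p_nd] := boolP (p \in primes d); first exact: leq_bigmax_seq.
by move: p_nd; rewrite -logn_gt0 lt0n negbK => /eqP->.
Qed.

Lemma max_logn_leq d m : (forall p, p \in primes d -> logn p d <= m) -> max_logn d <= m.
Proof. by move=> le_m; apply/bigmax_leqP_seq => p p_d _; apply: le_m. Qed.

Lemma dvdn_leq_max_logn d' d : 0 < d -> d' %| d -> max_logn d' <= max_logn d.
Proof.
move=> d_gt0 d'_d; apply: max_logn_leq => p _.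
exact: leq_trans (dvdn_leq_log p d_gt0 d'_d) (leq_max_logn p d).
Qed.

Lemma ltn_max_logn d' d :
  1 < d -> (forall p, p \in primes d -> d' %| d %/ p) -> max_logn d' < max_logn d.
Proof.
move=> d_gt1 d'_dvd; have d_gt0 := ltnW d_gt1.
have pdiv_d : pdiv d \in primes d by rewrite mem_primes pdiv_prime // d_gt0 pdiv_dvd.
have d'_d : d' %| d := dvdn_trans (d'_dvd _ pdiv_d) (dvdn_div (pdiv_dvd d)).
have max_gt0 : 0 < max_logn d.
  by apply: leq_trans (leq_max_logn (pdiv d) d); rewrite logn_gt0.
apply: (@leq_ltn_trans (max_logn d).-1); last by rewrite ltn_predL.
apply: max_logn_leq => p p_d'.
move: p_d'; rewrite mem_primes => /and3P[p_pr _ /dvdn_trans/(_ d'_d) p_dvd].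
have p_d : p \in primes d by rewrite mem_primes p_pr d_gt0.
have dp_gt0 : 0 < d %/ p by rewrite divn_gt0 ?prime_gt0 ?(dvdn_leq d_gt0 p_dvd).
apply: leq_trans (dvdn_leq_log p dp_gt0 (d'_dvd p p_d)) _.
by rewrite logn_div // (logn_prime _ p_pr) eqxx -subn1 leq_sub2r ?leq_max_logn.
Qed.

Local Open Scope ring_scope.

Lemma irreducible_factor (R : idomainType) (p : {poly R}) :
  (1 < size p)%N -> exists2 P, irreducible_poly P & P %| p.
Proof.
elim: {p}(size p).+1 {-2}p (ltnSn (size p)) => // m IH p p_m p_gt1.
have p_neq0 : p != 0 by rewrite -size_poly_gt0 ltnW.
have [[r /andP[r_gt1 r_lt] r_p] | no_r] :=
  classic (exists2 r : {poly R}, (1 < size r < size p)%N & r %| p).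
  have [P irr_P P_r] := IH r (leq_trans r_lt p_m) r_gt1.
  by exists P; last exact: dvdp_trans P_r r_p.
exists p => //; split=> // r r_neq1 r_p.
have r_neq0 : r != 0 by apply: contraNneq p_neq0 => r0; rewrite -dvd0p -r0.
rewrite -dvdp_size_eqp // eqn_leq dvdp_leq //= leqNgt; apply/negP => r_lt.
by apply: no_r; exists r; rewrite // r_lt andbT ltn_neqAle eq_sym r_neq1 size_poly_gt0.
Qed.

Section FiniteFieldPolynomials.
Variable F : finFieldType.
Implicit Types (f g h G P : {poly F}) (a b : nat).

Lemma dvdp_frobXD g a b :
  g %| frobX F a -> (g %| frobX F (a + b)) = (g %| frobX F b).
Proof.
move=> g_a; have -> : frobX F (a + b) =
    ('X ^+ (q F ^ a)) ^+ (q F ^ b) - 'X ^+ (q F ^ b) + frobX F b.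
  by rewrite /frobX expnD exprM addrA subrK.
by rewrite dvdp_addr // (dvdp_trans g_a) // /frobX subrXX dvdp_mulr.
Qed.

Lemma dvdp_frobX_dvdn g a b : (a %| b)%N -> g %| frobX F a -> g %| frobX F b.
Proof.
move=> /dvdnP[m ->] g_a; elim: m => [|m IH].
  by rewrite mul0n /frobX expn0 expr1 subrr dvdp0.
by rewrite mulSn dvdp_frobXD.
Qed.

Lemma dvdp_frobX_mod g a b :
  g %| frobX F b -> (g %| frobX F (a %% b)) = (g %| frobX F a).
Proof.
by move=> g_b; rewrite [in RHS](divn_eq a b) dvdp_frobXD // (dvdp_frobX_dvdn _ g_b) ?dvdn_mull.
Qed.

Lemma dvdp_frobX_gcd g a b :
  g %| frobX F a -> g %| frobX F b -> g %| frobX F (gcdn a b).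
Proof.
elim/ltn_ind: a b => a IH b g_a g_b; rewrite gcdnE; case: eqP => // /eqP a_neq0.
by apply: IH; rewrite ?ltn_pmod ?lt0n ?dvdp_frobX_mod.
Qed.

Lemma is_order_dvdp_frobX g s d x :
  is_order g s d -> (g %| frobX F (s * x)) = (d %| x)%N.
Proof.
move=> [d_gt0 [g_sd d_min]]; apply/idP/idP => [g_sx | d_x]; last first.
  exact: dvdp_frobX_dvdn (dvdn_mul (dvdnn s) d_x) g_sd.
have := dvdp_frobX_gcd g_sd g_sx; rewrite -muln_gcdr => /d_min.
rewrite gcdn_gt0 d_gt0 => /(_ isT) d_le; apply/gcdn_idPl/eqP.
by rewrite eqn_leq d_le andbT dvdn_leq ?dvdn_gcdl.
Qed.

Lemma is_order_exists g s x :
  (0 < x)%N -> g %| frobX F (s * x) -> exists d, is_order g s d.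
Proof.
move=> x_gt0 g_sx.
have ex_d : exists d, (0 < d)%N && (g %| frobX F (s * d)) by exists x; rewrite x_gt0.
case: (ex_minnP ex_d) => d /andP[d_gt0 g_sd] d_min.
by exists d; split=> //; split=> // d' d'_gt0 g_sd'; apply: d_min; rewrite d'_gt0.
Qed.

Lemma mgcd_mod_eqp g h u : g %| h -> mgcd (u %% h) g %= gcdp g u.
Proof.
move=> g_h; have scale_eqp : mgcd (u %% h) g %= gcdp (u %% h) g.
  rewrite /mgcd; have [->|gcd_neq0] := eqVneq (gcdp (u %% h) g) 0.
    by rewrite scaler0 eqpxx.
  by rewrite eqp_scale // invr_eq0 lead_coef_eq0.
apply: eqp_trans scale_eqp _.
have dvd_mod c : c %| g -> (c %| u %% h) = (c %| u).
  by move=> c_g; rewrite -dvdp_mod // (dvdp_trans c_g).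
rewrite /eqp !dvdp_gcd dvdp_gcdr dvdp_gcdl -(dvd_mod _ (dvdp_gcdr _ _)).
by rewrite (dvd_mod _ (dvdp_gcdl _ _)) dvdp_gcdl dvdp_gcdr.
Qed.

Lemma squarefree_dvdp f g : squarefree f -> g %| f -> squarefree g.
Proof. by move=> sq_f g_f h hh_g; apply: sq_f (dvdp_trans hh_g g_f). Qed.

Lemma squarefree_neq0 f : squarefree f -> f != 0.
Proof.
by move=> sq_f; apply/eqP => f0; have := sq_f 'X; rewrite f0 dvdp0 size_polyX => /(_ isT).
Qed.

Lemma size_le1_dvdp g h : g != 0 -> (size g <= 1)%N -> g %| h.
Proof.
move=> g_neq0 g_le1; have : size g == 1%N by rewrite eqn_leq g_le1 size_poly_gt0.
by rewrite size_poly_eq1 => /eqp_dvdl->; apply: dvd1p.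
Qed.

Lemma squarefree_coprimep_divp_gcd g u : squarefree g -> coprimep (g %/ gcdp g u) u.
Proof.
move=> sq_g; apply/coprimepP => c c_g c_u.
have def_g : g = g %/ gcdp g u * gcdp g u by rewrite divpK ?dvdp_gcdl.
have c_gcd : c %| gcdp g u by rewrite dvdp_gcd c_u (dvdp_trans c_g) ?divp_dvd ?dvdp_gcdl.
have c_neq0 : c != 0.
  apply: contra_neq (squarefree_neq0 sq_g) => c0.
  by move: c_g; rewrite c0 dvd0p => /eqP g_u0; rewrite def_g g_u0 mul0r.
have /sq_g c_le1 : c * c %| g by rewrite def_g dvdp_mul.
by rewrite -size_poly_eq1 eqn_leq c_le1 size_poly_gt0.
Qed.

Lemma squarefree_irreducible_dvdp f G :
  squarefree f -> (forall P, irreducible_poly P -> P %| f -> P %| G) -> f %| G.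
Proof.
elim: {f}(size f).+1 {-2}f (ltnSn (size f)) => // m IH f f_m sq_f irr_G.
have f_neq0 := squarefree_neq0 sq_f.
have [f_le1 | f_gt1] := leqP (size f) 1; first exact: size_le1_dvdp f_neq0 f_le1.
have [P irr_P P_f] := irreducible_factor f_gt1.
have P_gt1 : (1 < size P)%N by case: irr_P.
have def_f : f = f %/ P * P by rewrite divpK.
have fP_f : f %/ P %| f := divp_dvd P_f.
have fP_G : f %/ P %| G.
  apply: IH (squarefree_dvdp sq_f fP_f) _ => [|Q irr_Q Q_fP]; last first.
    exact: irr_G irr_Q (dvdp_trans Q_fP fP_f).
  rewrite size_divp ?irredp_neq0 //; rewrite ltnS in f_m; apply: leq_trans f_m.
  by rewrite ltn_subrL ltn_predRL P_gt1 (ltnW f_gt1).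
have cop : coprimep (f %/ P) P.
  rewrite coprimep_sym irreducible_poly_coprime //; apply/negP => P_fP.
  have /sq_f : P * P %| f by rewrite def_f dvdp_mul.
  by rewrite leqNgt P_gt1.
by rewrite def_f Gauss_dvdp // fP_G irr_G.
Qed.

Lemma irreducible_dvdp_frobX P : irreducible_poly P -> P %| frobX F (size P).-1.
Proof.
move=> irr_P; have P_neq0 := irredp_neq0 irr_P.
have c_neq0 : (lead_coef P)^-1 != 0 by rewrite invr_eq0 lead_coef_eq0.
set Q := (lead_coef P)^-1 *: P.
have QP : Q %= P by rewrite eqp_scale.
have mi_Q : monic_irreducible_poly Q.
  split; last by rewrite monicE lead_coefZ mulVf ?lead_coef_eq0.
  split=> [|r r_neq1 r_Q]; first by rewrite size_scale //; case: irr_P.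
  have r_P : r %| P by rewrite -(eqp_dvdr _ QP).
  by rewrite (eqp_ltrans (irr_P r r_neq1 r_P)) eqp_sym.
rewrite -(eqp_dvdl _ QP) -(size_scale P c_neq0) -/Q.
pose x : {poly %/ Q with mi_Q} := in_qpoly Q 'X.
have : x ^+ #|{poly %/ Q with mi_Q}| = x := expf_card x.
rewrite card_qfpoly => /eqP; rewrite -subr_eq0 => /eqP x_fixed.
have : in_qpoly Q (frobX F (size Q).-1) = 0 :> {poly %/ Q}.
  by rewrite /frobX rmorphB rmorphXn; exact: x_fixed.
move=> /(congr1 val) /=; rewrite (mk_monicE mi_Q) => mod0.
by rewrite dvdpE /Pdiv.Ring.rdvdp mod0.
Qed.

End FiniteFieldPolynomials.

(* The recursive calls (g, s') issued in steps (4)-(6) on ft, where d is the order of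
   tau = sigma^s on ft and ps lists the primes of d already processed: either s is kept
   and tau^(d/p) fixes g for each p in ps, or s' absorbs the full power of some prime
   p of d and no factor of g is fixed by tau^(d/p). *)
Definition child_spec (F : finFieldType) (ft : {poly F}) (s d : nat) (ps : seq nat)
    (g : {poly F}) (s' : nat) : Prop :=
  g %| ft /\
  ((s' = s /\ {in ps, forall p, g %| frobX F (s * (d %/ p))}) \/
   exists2 p, p \in primes d &
     (s * p ^ logn p d %| s')%N /\ coprimep g (frobX F (s * (d %/ p)))).

Lemma child_spec_dvdn (F : finFieldType) (ft g : {poly F}) s d ps s' :
  child_spec ft s d ps g s' -> (s %| s')%N.
Proof. by case=> _ [[-> _] | [p _ [/(dvdn_trans (dvdn_mulr _ (dvdnn s))) ]]]. Qed.

Section Children.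
Variables (F : finFieldType) (ft : {poly F}) (s d : nat).
Hypothesis sq_ft : squarefree ft.

Definition alg3_loop_inv (ps : seq nat) (st : {poly F} * nat * seq ({poly F} * nat)) :=
  child_spec ft s d ps st.1.1 st.1.2 /\
  {in st.2, forall c, child_spec ft s d (primes d) c.1 c.2}.

Lemma alg3_loop_step_inv ps st p :
  p \in primes d -> alg3_loop_inv ps st ->
  alg3_loop_inv (rcons ps p) (alg3_loop_step ft s d st p).
Proof.
move=> p_d; case: st => [[g s'] T] [/= spec_g spec_T]; rewrite /alg3_loop_step.
set u := frobX F (s * (d %/ p)); set gi := mgcd (u %% ft) g.
have g_ft : g %| ft := spec_g.1.
have gi_eqp : gi %= gcdp g u := mgcd_mod_eqp u g_ft.
have gi_g : gi %| g by rewrite (eqp_dvdl _ gi_eqp) dvdp_gcdl.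
have s_s' : (s * p ^ logn p d %| s' * p ^ logn p d)%N.
  by rewrite dvdn_mul ?(child_spec_dvdn spec_g).
case: ifP => [_ | /negbFE/eqP gi1]; split => //=.
- split; first exact: dvdp_trans gi_g g_ft.
  case: spec_g.2 => [[-> g_ps] | [p0 p0_d [s'_dvd cop]]]; [left | right].
    split=> // r; rewrite mem_rcons inE => /predU1P[-> | /g_ps]; last exact: dvdp_trans gi_g.
    by rewrite (eqp_dvdl _ gi_eqp) dvdp_gcdr.
  by exists p0 => //; split=> //; exact: coprimep_dvdr gi_g cop.
- move=> c; rewrite mem_rcons inE => /predU1P[-> | /spec_T //]; split=> /=.
    exact: dvdp_trans (divp_dvd gi_g) g_ft.
  right; exists p => //; split=> //.
  rewrite (eqp_coprimepl _ (eqp_divr g gi_eqp)).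
  exact: squarefree_coprimep_divp_gcd (squarefree_dvdp sq_ft g_ft).
- split=> //; right; exists p => //; split=> //.
  by rewrite -gcdp_eqp1 -(eqp_ltrans gi_eqp) gi1 eqpxx.
Qed.

Lemma alg3_loop_inv_foldl ps qs st :
  {subset qs <= primes d} -> alg3_loop_inv ps st ->
  alg3_loop_inv (ps ++ qs) (foldl (alg3_loop_step ft s d) st qs).
Proof.
elim: qs ps st => [|p qs IH] ps st qs_d inv_st /=; first by rewrite cats0.
rewrite -cat_rcons; apply: IH => [r r_qs | ]; first by apply: qs_d; rewrite inE r_qs orbT.
by apply: alg3_loop_step_inv inv_st; apply: qs_d; rewrite mem_head.
Qed.

Lemma alg3_children_spec c :
  c \in alg3_children ft s d -> child_spec ft s d (primes d) c.1 c.2.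
Proof.
rewrite /alg3_children; set R := (\prod_(p <- primes d) p)%N.
set u := frobX F (s * (d %/ R)); set g := mgcd (u %% ft) ft.
have g_eqp : g %= gcdp ft u := mgcd_mod_eqp u (dvdpp ft).
have g_fix : {in primes d, forall p, g %| frobX F (s * (d %/ p))}.
  move=> p p_d; have p_R : (p %| R)%N by rewrite /R (big_rem _ p_d) dvdn_mulr.
  have -> : (d %/ p = d %/ R * (R %/ p))%N by rewrite muln_divA // divnK ?prod_primes_dvdn.
  rewrite mulnA; apply: dvdp_frobX_dvdn (dvdn_mulr _ (dvdnn _)) _.
  by rewrite (eqp_dvdl _ g_eqp) dvdp_gcdr.
have inv0 : alg3_loop_inv [::] (ft %/ g, s, if g != 1 then [:: (g, s)] else [::]).
  split; first by split; [apply: divp_dvd; rewrite (eqp_dvdl _ g_eqp) dvdp_gcdl | left].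
  move=> c' /=; case: ifP => _; rewrite ?inE // => /eqP-> /=.
  by split; [rewrite (eqp_dvdl _ g_eqp) dvdp_gcdl | left].
have := alg3_loop_inv_foldl (fun _ => id) inv0.
by case: foldl => [[gl sl] T] [spec_l spec_T]; rewrite mem_rcons inE => /predU1P[-> | /spec_T].
Qed.

End Children.

Lemma alg3_call_spec (F : finFieldType) (g g' : {poly F}) s s' :
  squarefree g -> alg3_call g s g' s' ->
  exists ft d, [/\ ft %| g, is_order ft s d & child_spec ft s d (primes d) g' s'].
Proof.
move=> sq_g [_ [ft [d [out child]]]].
have [ft_g ord_d] : ft %| g /\ is_order ft s d.
  by case: out => [[-> ord_d] | [[_ [ft_g _]] ord_d]]; rewrite ?dvdpp.
by exists ft, d; split=> //; apply: alg3_children_spec child; apply: squarefree_dvdp ft_g.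
Qed.

Definition call_potential (d b : nat) : nat := max_logn d + trunc_log 2 b.

Section Potential.
Variable F : finFieldType.
Implicit Types (ft g P : {poly F}).

Lemma is_order_halve P s s' d p b :
  p \in primes d -> (s * p ^ logn p d %| s')%N -> is_order P s b ->
  P %| frobX F (s * d) -> ~~ (P %| frobX F (s * (d %/ p))) ->
  exists2 b', is_order P s' b' & (b'.*2 <= b)%N.
Proof.
move=> p_d /dvdnP[t ->] ord_b P_sd P_ndp.
move: (p_d); rewrite mem_primes => /and3P[p_pr d_gt0 _].
have b_gt0 : (0 < b)%N := ord_b.1.
have pe_b : (p ^ logn p d %| b)%N.
  apply: pfactor_logn_dvdn; rewrite -?(is_order_dvdp_frobX _ ord_b) //.
set e := (p ^ logn p d)%N in pe_b *.
have e_gt1 : (1 < e)%N by rewrite -[1%N](expn0 p) ltn_exp2l ?prime_gt1 ?logn_gt0.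
have be_gt0 : (0 < b %/ e)%N by rewrite divn_gt0 ?(ltnW e_gt1) ?(dvdn_leq b_gt0).
have P_c : P %| frobX F (t * (s * e) * (b %/ e)).
  rewrite -!mulnA (mulnC e) divnK //.
  exact: dvdp_frobX_dvdn (dvdn_mull _ (dvdnn _)) ord_b.2.1.
have [b' ord_b'] := is_order_exists be_gt0 P_c.
exists b' => //; have b'_be : (b' %| b %/ e)%N by rewrite -(is_order_dvdp_frobX _ ord_b').
by rewrite -muln2 -(divnK pe_b) leq_mul ?(dvdn_leq be_gt0).
Qed.

Lemma max_logn_order_lt ft g ft' s d d' :
  is_order ft s d -> g %| ft -> {in primes d, forall p, g %| frobX F (s * (d %/ p))} ->
  ~~ (g %| frobX F s) -> ft' %| g -> is_order ft' s d' -> (max_logn d' < max_logn d)%N.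
Proof.
move=> ord_d g_ft g_fix g_nfix ft'_g ord_d'.
apply: ltn_max_logn => [|p p_d]; last first.
  by rewrite -(is_order_dvdp_frobX _ ord_d') (dvdp_trans ft'_g) ?g_fix.
rewrite ltn_neqAle ord_d.1 andbT; apply: contraNneq g_nfix => d1.
by rewrite -[s]muln1 d1 (dvdp_trans g_ft ord_d.2.1).
Qed.

Lemma call_potential_lt ft g ft' P s d s' d' b :
  is_order ft s d -> child_spec ft s d (primes d) g s' -> ~~ (g %| frobX F s') ->
  ft' %| g -> is_order ft' s' d' -> (1 < size P)%N -> P %| g -> is_order P s b ->
  exists2 b', is_order P s' b' & (call_potential d' b' < call_potential d b)%N.
Proof.
move=> ord_d spec g_nfix ft'_g ord_d' P_gt1 P_g ord_b; rewrite /call_potential.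
have [g_ft [[s'_eq g_fix] | [p p_d [s'_dvd cop]]]] := spec.
  subst s'; exists b => //; rewrite ltn_add2r.
  exact: max_logn_order_lt ord_d g_ft g_fix g_nfix ft'_g ord_d'.
have ft_sd := ord_d.2.1.
have P_ndp : ~~ (P %| frobX F (s * (d %/ p))).
  apply/negP => P_u; have := coprimep_dvdl P_u (coprimep_dvdr P_g cop).
  by rewrite coprimepp => /eqP P1; rewrite P1 in P_gt1.
have [b' ord_b' b'_le] :=
  is_order_halve p_d s'_dvd ord_b (dvdp_trans P_g (dvdp_trans g_ft ft_sd)) P_ndp.
exists b' => //.
have d'_d : (d' %| d)%N.
  rewrite -(is_order_dvdp_frobX _ ord_d').
  apply: dvdp_frobX_dvdn (dvdp_trans ft'_g (dvdp_trans g_ft ft_sd)).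
  by rewrite dvdn_mul ?(child_spec_dvdn spec).
rewrite -addnS leq_add ?(dvdn_leq_max_logn ord_d.1 d'_d) //.
by rewrite -trunc_log2_double ?leq_trunc_log ?ord_b'.1.
Qed.

Lemma pfactor_order_leq g d p :
  squarefree g -> is_order g 1 d -> p \in primes d -> (p ^ logn p d <= (size g).-1)%N.
Proof.
move=> sq_g ord_d p_d; move: (p_d); rewrite mem_primes => /and3P[p_pr d_gt0 p_dvd].
have g_d : g %| frobX F d by move: ord_d.2.1; rewrite mul1n.
rewrite leqNgt; apply/negP => big_pe.
have g_dp : g %| frobX F (1 * (d %/ p)).
  rewrite mul1n; apply: (squarefree_irreducible_dvdp sq_g) => Q irr_Q Q_g.
  have Q_gt1 : (1 < size Q)%N by case: irr_Q.
  have Q_c := dvdp_frobX_gcd (dvdp_trans Q_g g_d) (irreducible_dvdp_frobX irr_Q).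
  apply: dvdp_frobX_dvdn Q_c; apply/negPn/negP => c_ndp.
  have := dvdn_leq _ (pfactor_logn_dvdn d_gt0 p_pr (dvdn_gcdl _ _) c_ndp).
  rewrite gcdn_gt0 d_gt0 => /(_ isT) pe_c; move: big_pe; rewrite ltnNge.
  have Q_le : ((size Q).-1 <= (size g).-1)%N.
    by rewrite -!subn1 leq_sub2r // (dvdp_leq (squarefree_neq0 sq_g) Q_g).
  have c_le : (gcdn d (size Q).-1 <= (size Q).-1)%N.
    by rewrite (dvdn_leq _ (dvdn_gcdr _ _)) // ltn_predRL.
  by rewrite (leq_trans pe_c (leq_trans c_le Q_le)).
have dp_gt0 : (0 < d %/ p)%N by rewrite divn_gt0 ?prime_gt0 ?(dvdn_leq d_gt0).
by have := ord_d.2.2 _ dp_gt0 g_dp; rewrite leqNgt ltn_Pdiv ?prime_gt1.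
Qed.

Lemma irreducible_order_exists P :
  irreducible_poly P -> exists2 b, is_order P 1 b & (b <= (size P).-1)%N.
Proof.
move=> irr_P; have P_gt1 : (1 < size P)%N by case: irr_P.
have deg_gt0 : (0 < (size P).-1)%N by rewrite ltn_predRL.
have P_fix : P %| frobX F (1 * (size P).-1) by rewrite mul1n irreducible_dvdp_frobX.
have [b ord_b] := is_order_exists deg_gt0 P_fix.
by exists b; rewrite // dvdn_leq // -(is_order_dvdp_frobX _ ord_b).
Qed.

Lemma max_logn_order_leq g d :
  squarefree g -> is_order g 1 d -> (max_logn d <= trunc_log 2 (size g).-1)%N.
Proof.
move=> sq_g ord_d; apply: max_logn_leq => p p_d; apply: trunc_log_max => //.
apply: leq_trans (pfactor_order_leq sq_g ord_d p_d).
by move: (p_d); rewrite mem_primes => /andP[p_pr _]; rewrite leq_exp2r ?prime_gt1 ?logn_gt0.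
Qed.

End Potential.

Section CallChain.
Variables (F : finFieldType) (f : {poly F}) (K : nat) (calls : nat -> {poly F} * nat).
Hypotheses (sq_f : squarefree f) (calls0 : calls 0 = (f, 1%N))
  (callsS : forall i, (i < K.+1)%N ->
     alg3_call (calls i).1 (calls i).2 (calls i.+1).1 (calls i.+1).2).

Lemma calls_dvdp i j : (j <= i <= K.+1)%N -> (calls i).1 %| (calls j).1.
Proof.
elim: i j => [|i IH] j /andP[j_i i_K]; first by move: j_i; rewrite leqn0 => /eqP->.
have [<- | j_le_i] := eqVneq j i.+1; first exact: dvdpp.
have j_i' : (j <= i)%N by rewrite -ltnS ltn_neqAle j_le_i j_i.
have sq_i : squarefree (calls i).1.
  by apply: squarefree_dvdp sq_f _; rewrite -[f]/((f, 1%N).1) -calls0 IH ?(ltnW i_K).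
have [ft [d [ft_i _ [g_ft _]]]] := alg3_call_spec sq_i (callsS i_K).
by rewrite (dvdp_trans g_ft) ?(dvdp_trans ft_i) ?IH ?j_i' ?(ltnW i_K).
Qed.

Lemma squarefree_calls i : (i <= K.+1)%N -> squarefree (calls i).1.
Proof.
by move=> i_K; apply: squarefree_dvdp sq_f _; rewrite -[f]/((f, 1%N).1) -calls0 calls_dvdp.
Qed.

Variables (n : nat) (P : {poly F}).
Hypotheses (size_f : size f = n.+1) (irr_P : irreducible_poly P) (P_K : P %| (calls K).1).

Lemma call_potential_bound j : (j <= K)%N ->
  exists ft d b, [/\ is_order ft (calls j).2 d,
    child_spec ft (calls j).2 d (primes d) (calls j.+1).1 (calls j.+1).2,
    is_order P (calls j).2 b & (call_potential d b + j <= 2 * trunc_log 2 n)%N].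
Proof.
have P_gt1 : (1 < size P)%N by case: irr_P.
have size_le h : h %| f -> ((size h).-1 <= n)%N.
  move=> h_f; rewrite -[n]/(n.+1).-1 -size_f -!subn1 leq_sub2r //.
  exact: dvdp_leq (squarefree_neq0 sq_f) h_f.
elim: j => [_ | j IH jK].
  have := alg3_call_spec (squarefree_calls (leq0n _)) (callsS (ltn0Sn K)).
  rewrite calls0 /= => -[ft [d [ft_f ord_d spec]]].
  have [b ord_b b_le] := irreducible_order_exists irr_P.
  exists ft, d, b; split=> //.
  have P_f : P %| f.
    by move: (calls_dvdp (leqnSn K : (0 <= K <= K.+1)%N)); rewrite calls0; apply: dvdp_trans.
  have max_le := max_logn_order_leq (squarefree_dvdp sq_f ft_f) ord_d.
  rewrite addn0 mul2n -addnn leq_add ?(leq_trans max_le) ?leq_trunc_log ?size_le //.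
  exact: leq_trans b_le (size_le _ P_f).
have [ft [d [b [ord_d spec ord_b bound]]]] := IH (ltnW jK).
have jK' : (j.+1 < K.+1)%N := jK.
have [g_nfix _] := callsS jK'.
have [ft' [d' [ft'_g ord_d' spec']]] :=
  alg3_call_spec (squarefree_calls (ltnW jK')) (callsS jK').
have P_g : P %| (calls j.+1).1 by apply: dvdp_trans P_K (calls_dvdp _); rewrite jK leqnSn.
have [b' ord_b' lt_b'] :=
  call_potential_lt ord_d spec (introN idP g_nfix) ft'_g ord_d' P_gt1 P_g ord_b.
by exists ft', d', b'; split=> //; move: bound lt_b'; rewrite /call_potential; lia.
Qed.

Lemma calls_depth : (K <= 2 * trunc_log 2 n)%N.
Proof.
by have [ft [d [b [_ _ _]]]] := call_potential_bound (leqnn K); rewrite /call_potential; lia.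
Qed.

End CallChain.

Local Close Scope ring_scope.

Theorem lemma2 : exists C : nat,
  forall (F : finFieldType) (n : nat) (f : {poly F}),
    f \is monic -> squarefree f -> size f = n.+1 ->
    forall (k : nat) (calls : nat -> {poly F} * nat),
      calls 0 = (f, 1) ->
      (forall i, i < k ->
         alg3_call (calls i).1 (calls i).2 (calls i.+1).1 (calls i.+1).2) ->
      k <= C * (trunc_log 2 n).+1.
Proof.
exists 2 => F n f _ sq_f size_f [|K] calls calls0 callsS //.
have [g_nfix _] := callsS K (ltnSn K).
have sq_K := squarefree_calls sq_f calls0 callsS (leqnSn K).
have K_gt1 : 1 < size (calls K).1.
  rewrite ltnNge; apply/negP => K_le1; apply: g_nfix.
  exact: size_le1_dvdp (squarefree_neq0 sq_K) K_le1.
have [P irr_P P_K] := irreducible_factor K_gt1.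
have := calls_depth sq_f calls0 callsS size_f irr_P P_K; lia.
Qed.
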